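(* Let $\Phi=B_l$ with $l\ge2$, fix a system of positive roots $\Phi^+$, and let $\Delta$ be a nonempty subset of $\Phi^+$. Then there exist a long root $\alpha\in\Phi^+$ and a root $\beta\in\Delta$ such that $\alpha+\gamma\notin\Phi$ for all $\gamma\in\Delta$ and $(\alpha,\beta)\ne0$.
   Context: $(\cdot,\cdot)$ denotes the inner product of the Euclidean space containing the root system. *)

From HB Require Import structures.
From mathcomp Require Import all_boot all_order all_algebra.
Set Implicit Arguments. Unset Strict Implicit. Unset Printing Implicit Defensive.
Import Order.TTheory GRing.Theory Num.Theory.
Local Open Scope ring_scope.

(* Vectors of Z^l (coordinates w.r.t. the orthonormal basis e_1..e_l of R^l). *)
Definition vecZ (l : nat) := 'rV[int]_l.

Definition dotZ (l : nat) (a b : vecZ l) : int := \sum_(i < l) a ord0 i * b ord0 i.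

(* Root system B_l realised in R^l:  { +-e_i } U { +-e_i +- e_j, i <> j }.
   Equivalently: nonzero integer vectors with entries in {-1,0,1} and
   at most two nonzero entries. *)
Definition rootB (l : nat) (a : vecZ l) : bool :=
  [forall i, (a ord0 i == 0) || (a ord0 i == 1) || (a ord0 i == -1)] &&
  (0 < #|[set i | a ord0 i != 0]| <= 2)%N.

Definition longB (l : nat) (a : vecZ l) : bool := dotZ a a == 2.

(* A system of positive roots: the roots on which some linear functional,
   nonvanishing on all roots (a regular functional), is positive. *)
Definition eval_fun (l : nat) (v : 'rV[rat]_l) (a : vecZ l) : rat :=
  \sum_(i < l) (a ord0 i)%:~R * v ord0 i.

Definition is_positive_system (l : nat) (P : vecZ l -> Prop) : Prop :=
  exists v : 'rV[rat]_l,
    (forall a, rootB a -> eval_fun v a != 0) /\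
    (forall a, P a <-> (rootB a /\ 0 < eval_fun v a)).

From HB Require Import structures.
From mathcomp Require Import all_boot all_order all_algebra zify ring lra.
Import Order.TTheory GRing.Theory Num.Theory.
From Stdlib Require Import Classical.
Set Implicit Arguments. Unset Strict Implicit. Unset Printing Implicit Defensive.
Local Open Scope ring_scope.

(* 1. The roots are exactly the integer vectors of squared length 1 (short)
      or 2 (long); in particular there are finitely many of them.
   2. Every short root g sits under a long root u with (u, g) = 1
      (u = g + e_j for a coordinate j where g vanishes; this needs l >= 2).
   3. If a is long and g, a + g are roots, then (a, g) = -1 and one of
      a + g, a + 2g is a long root c with (c, g) = 1.
   Among the long positive roots a having (a, beta) <> 0 for some beta in
   Delta (there is one by 2, up to sign), choose one maximising the regular
   functional defining the positive system.  If a + g were a root for some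
   g in Delta, then 3 would produce a candidate strictly higher than a. *)

Definition unit_entry (x : int) := (x == 0) || (x == 1) || (x == -1).

Lemma unit_entry_sq (x : int) : x * x <= 2 -> unit_entry x.
Proof. rewrite /unit_entry; nia. Qed.

Lemma sq_unit_entry (x : int) : unit_entry x -> x * x = ((x != 0) : nat)%:Z.
Proof. by rewrite /unit_entry => /orP[/orP[]|] /eqP ->. Qed.

Lemma max_over_seq (T : eqType) (d : Order.disp_t) (R : orderType d)
    (s : seq T) (P : T -> Prop) (f : T -> R) :
  (forall x, P x -> x \in s) -> (exists x, P x) ->
  exists m, P m /\ forall y, P y -> (f y <= f m)%O.
Proof.
move=> Ps [x0 Px0].
suff [m [Pm mmax]] : exists m, P m /\ forall y, y \in s -> P y -> (f y <= f m)%O.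
  by exists m; split => // y Py; apply: mmax (Ps y Py) Py.
have : exists2 x, x \in s & P x by exists x0; [apply: Ps|].
elim: s {Ps} => [[x]|x s IH]; first by rewrite in_nil.
have [[y ys Py]|none] := classic (exists2 y, y \in s & P y).
- have [m [Pm mmax]] := IH (ex_intro2 _ _ y ys Py).
  have [Px|nPx] := classic (P x).
  + have [fxm|fmx] := leP (f x) (f m).
    * exists m; split => // z; rewrite inE => /orP[/eqP->|/mmax]//.
    * exists x; split => // z; rewrite inE => /orP[/eqP->//|zs Pz].
      exact: le_trans (mmax z zs Pz) (ltW fmx).
  + by exists m; split => // z; rewrite inE => /orP[/eqP->|/mmax].
- move=> [z zxs Pz]; exists x.
  have Px : P x.
    by move: zxs; rewrite inE => /orP[/eqP<-//|zs]; case: none; exists z.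
  split => // y; rewrite inE => /orP[/eqP->//|ys Py].
  by case: none; exists y.
Qed.

Section RootsB.
Variable l : nat.
Implicit Types a b c g u : vecZ l.

Lemma dotDl a b c : dotZ (a + b) c = dotZ a c + dotZ b c.
Proof. rewrite /dotZ -big_split; apply: eq_bigr => i _; by rewrite mxE mulrDl. Qed.

Lemma dotNl a c : dotZ (- a) c = - dotZ a c.
Proof. rewrite /dotZ -sumrN; apply: eq_bigr => i _; by rewrite mxE mulNr. Qed.

Lemma dotC a b : dotZ a b = dotZ b a.
Proof. rewrite /dotZ; apply: eq_bigr => i _; by rewrite mulrC. Qed.

Lemma dotDr a b c : dotZ c (a + b) = dotZ c a + dotZ c b.
Proof. by rewrite dotC dotDl !(dotC c). Qed.

Lemma dotNr a c : dotZ c (- a) = - dotZ c a.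
Proof. by rewrite dotC dotNl dotC. Qed.

Lemma dot_delta j b : dotZ (delta_mx 0 j) b = b ord0 j.
Proof.
rewrite /dotZ (bigD1 j) //= big1 => [|k kj]; rewrite !mxE ?eqxx //=.
  by rewrite mul1r addr0.
by rewrite (negbTE kj) /= mul0r.
Qed.

Lemma evalD v a b : eval_fun v (a + b) = eval_fun v a + eval_fun v b.
Proof.
rewrite /eval_fun -big_split; apply: eq_bigr => i _.
by rewrite mxE intrD mulrDl.
Qed.

Lemma evalN v a : eval_fun v (- a) = - eval_fun v a.
Proof.
rewrite /eval_fun -sumrN; apply: eq_bigr => i _.
by rewrite mxE intrN mulNr.
Qed.

Lemma root_unit_entry a : rootB a -> forall i, unit_entry (a ord0 i).
Proof. by case/andP => /forallP. Qed.

Lemma dot_card a : (forall i, unit_entry (a ord0 i)) ->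
  dotZ a a = (#|[set i | a ord0 i != 0]|)%:Z.
Proof.
move=> ua; rewrite /dotZ (eq_bigr (fun i => ((a ord0 i != 0) : nat)%:Z)).
  rewrite -sum1_card big_mkcond /= (big_morph Posz PoszD (erefl (Posz 0%N))).
  rewrite [RHS]big_mkcond; by apply: eq_bigr => i _; rewrite inE; case: (a ord0 i != 0).
by move=> i _; rewrite sq_unit_entry.
Qed.

Lemma coord_sq_le a i : a ord0 i * a ord0 i <= dotZ a a.
Proof.
rewrite /dotZ (bigD1 i) //= lerDl; apply: sumr_ge0 => j _.
by rewrite -expr2 sqr_ge0.
Qed.

Lemma rootB_norm a : rootB a = (dotZ a a == 1) || (dotZ a a == 2).
Proof.
apply/idP/idP.
  move=> ra; rewrite dot_card; last exact: root_unit_entry.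
  by case/andP: ra => _; move: #|_| => n; lia.
move=> h; have le2 : dotZ a a <= 2 by case/orP: h => /eqP ->.
have ua i : unit_entry (a ord0 i).
  by apply: unit_entry_sq; apply: le_trans (coord_sq_le a i) le2.
apply/andP; split; first by apply/forallP.
by move: h; rewrite dot_card //; move: #|_| => n; lia.
Qed.

Lemma longB_rootB a : longB a -> rootB a.
Proof. by rewrite rootB_norm /longB => ->; rewrite orbT. Qed.

(* The roots form a finite set: they are images of {ffun 'I_l -> 'I_3}. *)
Lemma rootB_finite : exists s : seq (vecZ l), forall a, rootB a -> a \in s.
Proof.
pose dec (x : {ffun 'I_l -> 'I_3}) : vecZ l := \row_i ((x i : nat)%:Z - 1).
exists [seq dec x | x <- enum {: {ffun 'I_l -> 'I_3}}] => a ra.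
pose x : {ffun 'I_l -> 'I_3} := [ffun i => inord (absz (a ord0 i + 1))].
suff <- : dec x = a by apply: map_f; rewrite mem_enum.
apply/rowP => i; rewrite !mxE ffunE ord1.
by case/orP: (root_unit_entry ra i) => [/orP[]|] /eqP ->; rewrite inordK.
Qed.

Lemma short_root_raise g : (2 <= l)%N -> rootB g -> dotZ g g = 1 ->
  exists2 u, longB u & dotZ u g = 1.
Proof.
move=> hl rg hg.
have [j /eqP gj0] : exists j, g ord0 j == 0.
  apply/existsP; apply: contraFT (negbF (eqxx 1 : (1 : int) == 1)).
  move=> /existsPn nz; apply/negP; rewrite -[X in X == _]hg dot_card.
    rewrite (_ : [set i | _] = setT) ?cardsT ?card_ord; first by move: hl; lia.
    by apply/setP => i; rewrite !inE nz.
  exact: root_unit_entry.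
exists (g + delta_mx 0 j).
  rewrite /longB dotDl !dotDr hg !dot_delta (dotC g) dot_delta gj0 mxE !eqxx.
  by apply/eqP; lia.
by rewrite dotDl hg dot_delta gj0 addr0.
Qed.

Lemma long_partner g : (2 <= l)%N -> rootB g -> exists2 u, longB u & dotZ u g != 0.
Proof.
move=> hl rg; move: (rg); rewrite rootB_norm => /orP[/eqP hg|Lg].
  by have [u Lu ug] := short_root_raise hl rg hg; exists u; rewrite ?ug.
by exists g; rewrite ?(eqP Lg).
Qed.

Lemma long_add_root a g : longB a -> rootB g -> rootB (a + g) ->
  exists c, [/\ longB c, dotZ c g = 1 & c = a + g \/ c = a + g + g].
Proof.
rewrite /longB => /eqP ha; rewrite !rootB_norm.
have hag : dotZ (a + g) (a + g) = 2 + 2 * dotZ a g + dotZ g g.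
  by rewrite dotDl !dotDr (dotC g a) ha; ring.
have hc2 : dotZ (a + g + g) (a + g + g) = 2 + 4 * dotZ a g + 4 * dotZ g g.
  by rewrite !dotDl !dotDr (dotC g a) ha; ring.
have hcg1 : dotZ (a + g) g = dotZ a g + dotZ g g by rewrite dotDl.
have hcg2 : dotZ (a + g + g) g = dotZ a g + 2 * dotZ g g by rewrite !dotDl; ring.
rewrite hag; case/orP => /eqP hg; rewrite hg => hsum.
- have hx : dotZ a g = -1 by lia.
  exists (a + g + g); split; last by right.
  + by rewrite hc2 hx hg.
  + by rewrite hcg2 hx hg.
- have hx : dotZ a g = -1 by lia.
  exists (a + g); split; last by left.
  + by rewrite hag hg hx.
  + by rewrite hcg1 hx hg.
Qed.

End RootsB.

Theorem lemma5p6 (l : nat) (hl : (2 <= l)%N)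
  (Pos : vecZ l -> Prop) (hPos : is_positive_system Pos)
  (Delta : vecZ l -> Prop)
  (hsub : forall g, Delta g -> Pos g)
  (hne : exists g, Delta g) :
  exists alpha, [/\ Pos alpha, longB alpha,
    (forall g, Delta g -> ~~ rootB (alpha + g)) &
    exists2 beta, Delta beta & dotZ alpha beta != 0].
Proof.
case: hPos => v [regv hP].
pose cand a := [/\ Pos a, longB a & exists2 b, Delta b & dotZ a b != 0].
have cand_sign u g : longB u -> Delta g -> dotZ u g != 0 -> cand u \/ cand (- u).
  move=> Lu Dg ug; have Lnu : longB (- u) by rewrite /longB dotNl dotNr opprK.
  have := regv u (longB_rootB Lu); rewrite neq_lt => /orP[neg|pos].
  - right; split => //; last by exists g; rewrite // dotNl oppr_eq0.
    by apply/hP; rewrite evalN oppr_gt0 longB_rootB.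
  - by left; split => //; [apply/hP; rewrite longB_rootB | exists g].
have [a [[Pa La [b Db ab]] amax]] :
    exists a, cand a /\ forall c, cand c -> eval_fun v c <= eval_fun v a.
  have [s rs] := rootB_finite l.
  apply: (max_over_seq (s := s)) => [c [Pc _ _]|]; first by apply/rs; case/hP: Pc.
  case: hne => g Dg; have [rg _] := (hP g).1 (hsub g Dg).
  have [u Lu ug] := long_partner hl rg.
  by have [|] := cand_sign u g Lu Dg ug; [exists u | exists (- u)].
exists a; split => //; last by exists b.
(* If a + g were a root, the long root c = a + g or a + 2g would be a
   candidate strictly above the maximal one. *)
move=> g Dg; apply/negP => rag.
have [rg pg] := (hP g).1 (hsub g Dg); have [_ pa] := (hP a).1 Pa.
have [c [Lc cg sum]] := long_add_root La rg rag.
have Pc : Pos c.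
  by apply/hP; split; [exact: longB_rootB|case: sum => ->; rewrite !evalD; lra].
have : eval_fun v c <= eval_fun v a by apply: amax; split => //; exists g; rewrite ?cg.
by case: sum => ->; rewrite !evalD; lra.
Qed.
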